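(* Let $p$ be an odd prime, $q=p^m$, $q=et+1$ with integers $e\geq 2,t\geq 1$, $R_{e,q}=\mathbb{F}_q[u]/\langle u^e-1\rangle$, and let $\varphi:R_{e,q}^n\to\mathbb{F}_q^{en}$ be the Gray map defined by a matrix $M\in GL_e(\mathbb{F}_q)$ with $MM^T=\gamma I_e$, $\gamma\in\mathbb{F}_q^*$ (see context). Let $\mathcal{C}$ be a linear code of length $n$ over $R_{e,q}$ with $|\mathcal{C}|=q^{ek}$ and Gray distance $d_G$. Then: (1) $\varphi(\mathcal{C})$ is an $[en,ek,d_H]$ linear code over $\mathbb{F}_q$ with $d_H=d_G$; (2) $\varphi(\mathcal{C}^\perp)=(\varphi(\mathcal{C}))^\perp$; (3) if $\mathcal{C}$ is (Euclidean) self-orthogonal then $\varphi(\mathcal{C})$ is a (Euclidean) self-orthogonal linear code of length $en$ over $\mathbb{F}_q$; (4) $\varphi(\mathcal{C})$ is self-dual if and only if $\mathcal{C}$ is self-dual.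
   Context: Write $u^e-1=\prod_{i=1}^e(u-\alpha_i)$ over $\mathbb{F}_q$, $G_i=u-\alpha_i$, $\widehat{G}_i=(u^e-1)/G_i$, $z_iG_i+h_i\widehat{G}_i=1$, $\mu_i=h_i\widehat{G}_i$; these are pairwise orthogonal idempotents summing to $1$, and each $r\in R_{e,q}$ is uniquely $r=\sum_{i=1}^e s_i\mu_i$, $s_i\in\mathbb{F}_q$. The Gray map is $\varphi(r_0,\dots,r_{n-1})=(\boldsymbol{r_0}M,\dots,\boldsymbol{r_{n-1}}M)$ where $\boldsymbol{r_j}=(s_{j,1},\dots,s_{j,e})$ for $r_j=\sum_i s_{j,i}\mu_i$. A linear code is an $R_{e,q}$-submodule of $R_{e,q}^n$; $\mathcal{C}^\perp$ is taken with respect to the Euclidean inner product $x\cdot y=\sum_i x_iy_i$. Gray weight $w_G(r)=w_H(\varphi(r))$, Gray distance $d_G(c,c')=w_G(c-c')$, and $d_G$ of a code is the minimum over distinct codewords. *)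

From HB Require Import structures.
From mathcomp Require Import all_boot all_order all_algebra all_field.
Set Implicit Arguments. Unset Strict Implicit. Unset Printing Implicit Defensive.
Import GRing.Theory.
Local Open Scope ring_scope.

(* Elements of R_{e,q} = F[u]/<u^e - 1> are represented by their coefficient
   vectors in the basis 1, u, ..., u^(e-1), i.e. by 'rV[F]_e. *)
Section Ring.
Variables (F : finFieldType) (e : nat).

Definition modpoly : {poly F} := 'X^e - 1.

Definition poly_of (v : 'rV[F]_e) : {poly F} := \sum_(i < e) v 0 i *: 'X^i.

Definition rV_of (p : {poly F}) : 'rV[F]_e := \row_(i < e) (p %% modpoly)`_i.

Definition rmul (a b : 'rV[F]_e) : 'rV[F]_e := rV_of (poly_of a * poly_of b).

Definition Gpol (alpha : 'I_e -> F) (i : 'I_e) : {poly F} := 'X - (alpha i)%:P.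
Definition Ghat (alpha : 'I_e -> F) (i : 'I_e) : {poly F} := modpoly %/ Gpol alpha i.

Definition idem_decomp (alpha : 'I_e -> F) (mu : 'I_e -> 'rV[F]_e) : Prop :=
  forall i, exists z h : {poly F},
    z * Gpol alpha i + h * Ghat alpha i = 1 /\ mu i = rV_of (h * Ghat alpha i).

Definition coord (mu : 'I_e -> 'rV[F]_e) (r : 'rV[F]_e) : 'rV[F]_e :=
  odflt 0 [pick s : 'rV[F]_e | \sum_(i < e) s 0 i *: mu i == r].

Section Codes.
Variable n : nat.

(* a word of R^n: row j is the component r_j *)
Definition Rscale (r : 'rV[F]_e) (c : 'M[F]_(n, e)) : 'M[F]_(n, e) :=
  \matrix_(j < n) rmul r (row j c).

Definition Rlinear (C : {set 'M[F]_(n, e)}) : Prop :=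
  [/\ 0 \in C,
      (forall x y, x \in C -> y \in C -> x + y \in C) &
      (forall r x, x \in C -> Rscale r x \in C)].

Definition Rdot (x y : 'M[F]_(n, e)) : 'rV[F]_e := \sum_(j < n) rmul (row j x) (row j y).

Definition Rdual (C : {set 'M[F]_(n, e)}) : {set 'M[F]_(n, e)} :=
  [set y | [forall x in C, Rdot x y == 0]].

Definition gray (mu : 'I_e -> 'rV[F]_e) (M : 'M[F]_e) (c : 'M[F]_(n, e)) : 'rV[F]_(n * e) :=
  mxvec (\matrix_(j < n) (coord mu (row j c) *m M)).

Definition hamming (N : nat) (u v : 'rV[F]_N) : nat := #|[set i | u 0 i != v 0 i]|.

(* Gray distance of a code (minimum over distinct codewords; (n*e).+1 if none) *)
Definition dG mu M (C : {set 'M[F]_(n, e)}) : nat :=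
  \big[minn/(n * e).+1]_(x in C) \big[minn/(n * e).+1]_(y in C | y != x)
     hamming (gray mu M (x - y)) 0.

Definition dH (S : {set 'rV[F]_(n * e)}) : nat :=
  \big[minn/(n * e).+1]_(x in S) \big[minn/(n * e).+1]_(y in S | y != x) hamming x y.

Definition Fdual (S : {set 'rV[F]_(n * e)}) : {set 'rV[F]_(n * e)} :=
  [set v | [forall w in S, w *m v^T == 0]].

End Codes.
End Ring.

From Pilot Require Import Defs.
From HB Require Import structures.
From mathcomp Require Import all_boot all_order all_algebra all_field.
Set Implicit Arguments. Unset Strict Implicit. Unset Printing Implicit Defensive.
Import GRing.Theory.
Local Open Scope ring_scope.

(* Evaluation at the roots alpha_i of u^e - 1, r |-> r *m V with V the
   Vandermonde matrix of the alpha_i, is a ring morphism R_{e,q} -> F^e; the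
   Bezout relations make mu_i take the value 1 at alpha_i and 0 at the other
   roots, so it maps the mu_i to the unit vectors and is bijective.  Hence
   coord mu r = r *m V and the Gray map is c |-> mxvec (c *m V *m M), an
   F-linear bijection.  On evaluated coordinates the R-valued inner product is
   computed pointwise, while M M^T = gamma I turns the F-inner product of two
   Gray images into gamma times the sum of these pointwise products.
   Multiplying a codeword by mu_l isolates the l-th pointwise product, so the
   Gray image of the R-dual is the F-dual of the Gray image; the other claims
   follow from bijectivity. *)

Section Evaluation.
Variables (F : finFieldType) (e : nat) (alpha : 'I_e -> F) (mu : 'I_e -> 'rV[F]_e).
Hypothesis e_gt0 : (0 < e)%N.
Hypothesis modpoly_split : modpoly F e = \prod_(i < e) ('X - (alpha i)%:P).
Hypothesis mu_idem : idem_decomp alpha mu.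

Definition eval_mx : 'M[F]_e := \matrix_(k < e, i < e) alpha i ^+ k.

Lemma eval_poly_of r i : (r *m eval_mx) 0 i = (poly_of r).[alpha i].
Proof.
rewrite !mxE /poly_of horner_sum; apply: eq_bigr => k _.
by rewrite hornerZ hornerXn mxE.
Qed.

Lemma root_modpoly i : root (modpoly F e) (alpha i).
Proof. by rewrite modpoly_split /root horner_prod (bigD1 i) //= hornerXsubC subrr mul0r. Qed.

Lemma size_modpoly : size (modpoly F e) = e.+1.
Proof. by rewrite /modpoly -polyC1 size_XnsubC. Qed.

Lemma poly_of_rV p : poly_of (rV_of e p) = p %% modpoly F e.
Proof.
rewrite /poly_of; under eq_bigr do rewrite mxE.
rewrite -poly_def; apply/polyP => k; rewrite coef_poly.
case: ltnP => // le_e_k; rewrite nth_default //.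
have modpoly_neq0 : modpoly F e != 0 by rewrite -size_poly_eq0 size_modpoly.
by apply: leq_trans le_e_k; rewrite -ltnS -size_modpoly ltn_modp.
Qed.

Lemma eval_rV_of p i : (rV_of e p *m eval_mx) 0 i = p.[alpha i].
Proof.
rewrite eval_poly_of poly_of_rV [in RHS](divp_eq p (modpoly F e)) hornerD hornerM.
by rewrite (rootP (root_modpoly i)) mulr0 add0r.
Qed.

Lemma eval_rmul a b i :
  (rmul a b *m eval_mx) 0 i = (a *m eval_mx) 0 i * (b *m eval_mx) 0 i.
Proof. by rewrite /rmul eval_rV_of hornerM !eval_poly_of. Qed.

Lemma Ghat_prod i : Ghat alpha i = \prod_(j | j != i) ('X - (alpha j)%:P).
Proof. by rewrite /Ghat modpoly_split (bigD1 i) //= mulKp // polyXsubC_eq0. Qed.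

Lemma eval_idem i j : (mu i *m eval_mx) 0 j = (i == j)%:R.
Proof.
have [z [h [bezout ->]]] := mu_idem i; rewrite eval_rV_of.
have [<-|/negPf neq_ij] := eqVneq i j.
  have := congr1 (horner^~ (alpha i)) bezout.
  by rewrite /= hornerD !hornerM /Gpol hornerXsubC subrr mulr0 add0r hornerC.
rewrite hornerM Ghat_prod horner_prod (bigD1 j) 1?eq_sym ?neq_ij //=.
by rewrite hornerXsubC subrr mul0r mulr0.
Qed.

Definition idem_mx : 'M[F]_e := \matrix_(i < e) mu i.

Lemma idem_mxK : idem_mx *m eval_mx = 1%:M.
Proof.
apply/row_matrixP => i; rewrite row_mul rowK row1; apply/rowP => j.
by rewrite eval_idem !mxE eq_sym.
Qed.

Lemma eval_mx_unit : eval_mx \in unitmx.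
Proof. by case: (mulmx1_unit idem_mxK). Qed.

Lemma coord_eval r : Defs.coord mu r = r *m eval_mx.
Proof.
have sum_idem (s : 'rV[F]_e) : \sum_(i < e) s 0 i *: mu i = s *m idem_mx.
  by rewrite mulmx_sum_row; apply: eq_bigr => i _; rewrite rowK.
have eval_mxK : eval_mx *m idem_mx = 1%:M by apply: mulmx1C idem_mxK.
rewrite /Defs.coord; case: pickP => [s /eqP <- | no_coord] /=.
  by rewrite sum_idem -mulmxA idem_mxK mulmx1.
by have := no_coord (r *m eval_mx); rewrite sum_idem -mulmxA eval_mxK mulmx1 eqxx.
Qed.

End Evaluation.

Lemma mxvec_dot (F : fieldType) m n (A B : 'M[F]_(m, n)) :
  mxvec A *m (mxvec B)^T = (\tr (A *m B^T))%:M.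
Proof.
apply/matrixP => i j; rewrite !ord1 !mxE eqxx mulr1n.
under [RHS]eq_bigr do rewrite mxE.
rewrite (reindex _ (curry_mxvec_bij _ _)) /= pair_big /=.
by apply: eq_bigr => -[a b] _; rewrite !mxE !mxvecE.
Qed.

Lemma mulmx_rowE (R : pzRingType) m n p (A : 'M[R]_(m, n)) (B : 'M[R]_(n, p)) i k :
  (A *m B) i k = (row i A *m B) 0 k.
Proof. by rewrite -row_mul [RHS]mxE. Qed.

Lemma card_rowspace (F : finFieldType) N (S : 'M[F]_N) :
  #|[set v : 'rV_N | (v <= S)%MS]| = (#|F| ^ \rank S)%N.
Proof.
have -> : [set v : 'rV_N | (v <= S)%MS] = [set u *m row_base S | u in [set: 'rV_(\rank S)]].
  apply/setP => v; rewrite inE -(eq_row_base S); apply/idP/imsetP.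
    by move/submxP => [u ->]; exists u; rewrite ?inE.
  by move=> [u _ ->]; rewrite submxMl.
rewrite card_imset ?cardsT ?card_mx ?mul1n //.
exact: row_free_inj (row_base_free S).
Qed.

Lemma subspace_rowspace (F : finFieldType) N (S : {set 'rV[F]_N}) :
  0 \in S -> {in S &, forall u v, u + v \in S} ->
  (forall a, {in S, forall v, a *: v \in S}) ->
  S = [set v | (v <= \sum_(w in S) <<w>>)%MS].
Proof.
move=> S0 SD SZ; apply/setP => v; rewrite inE; apply/idP/idP.
  by move=> Sv; apply: (sumsmx_sup v) => //; rewrite genmxE.
move/sub_sumsmxP => [u ->]; apply: (big_ind [in S]) => // w Sw.
have : (u w *m <<w>>%MS <= w)%MS by rewrite (submx_trans (submxMl _ _)) ?genmxE.
by move/sub_rVP => [a ->]; apply: SZ.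
Qed.

#[local] HB.instance Definition _ := SemiGroup.isComLaw.Build nat minn minnA minnC.

Section Gray.
Variables (F : finFieldType) (e : nat) (alpha : 'I_e -> F) (mu : 'I_e -> 'rV[F]_e).
Hypothesis e_gt0 : (0 < e)%N.
Hypothesis modpoly_split : modpoly F e = \prod_(i < e) ('X - (alpha i)%:P).
Hypothesis mu_idem : idem_decomp alpha mu.
Variables (n : nat) (M : 'M[F]_e).
Hypothesis M_unit : M \in unitmx.

Local Notation V := (eval_mx alpha).
Local Notation g := (gray mu M : 'M[F]_(n, e) -> _).

Lemma grayE c : g c = mxvec (c *m (V *m M)).
Proof.
rewrite /gray; congr mxvec; apply/row_matrixP => j.
by rewrite rowK (coord_eval e_gt0 modpoly_split mu_idem) !row_mul mulmxA.
Qed.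

Lemma gray_unit : V *m M \in unitmx.
Proof. by rewrite unitmx_mul (eval_mx_unit e_gt0 modpoly_split mu_idem) M_unit. Qed.

Lemma gray0 : g 0 = 0.
Proof. by rewrite grayE mul0mx linear0. Qed.

Lemma grayD x y : g (x + y) = g x + g y.
Proof. by rewrite !grayE mulmxDl linearD. Qed.

Lemma grayB x y : g (x - y) = g x - g y.
Proof. by rewrite !grayE mulmxBl linearB. Qed.

Lemma grayZ a x : g (a *: x) = a *: g x.
Proof. by rewrite !grayE -scalemxAl linearZ. Qed.

Lemma gray_inj : injective g.
Proof.
move=> x y; rewrite !grayE => /(can_inj mxvecK) eq_xy.
by rewrite -(mulmxK gray_unit x) eq_xy mulmxK // gray_unit.
Qed.

Lemma gray_surj v : exists c, v = g c.
Proof.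
exists (vec_mx v *m invmx (V *m M)).
by rewrite grayE mulmxKV ?gray_unit // vec_mxK.
Qed.

Lemma Rscale_eval r (x : 'M[F]_(n, e)) j k :
  (Rscale r x *m V) j k = (r *m V) 0 k * (x *m V) j k.
Proof.
by rewrite !(mulmx_rowE _ _ j) rowK (eval_rmul e_gt0 modpoly_split).
Qed.

Lemma Rdot_eval (x y : 'M[F]_(n, e)) k :
  (Rdot x y *m V) 0 k = \sum_(j < n) (x *m V) j k * (y *m V) j k.
Proof.
rewrite /Rdot mulmx_suml summxE; apply: eq_bigr => j _.
by rewrite (eval_rmul e_gt0 modpoly_split) -!mulmx_rowE.
Qed.

Lemma Rdot_Rscale_eval r (x y : 'M[F]_(n, e)) k :
  (Rdot (Rscale r x) y *m V) 0 k = (r *m V) 0 k * (Rdot x y *m V) 0 k.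
Proof.
rewrite !Rdot_eval mulr_sumr; apply: eq_bigr => j _.
by rewrite Rscale_eval mulrA.
Qed.

Lemma Rdot_Rscale_idem_sum l (x y : 'M[F]_(n, e)) :
  \sum_(k < e) (Rdot (Rscale (mu l) x) y *m V) 0 k = (Rdot x y *m V) 0 l.
Proof.
under eq_bigr do rewrite Rdot_Rscale_eval (eval_idem e_gt0 modpoly_split mu_idem) mulr_natl mulrb.
by rewrite -big_mkcond (big_pred1 l) // => k; rewrite eq_sym.
Qed.

Lemma dH_gray (C : {set 'M[F]_(n, e)}) : dH (g @: C) = dG mu M C.
Proof.
have mem_g (A : {set 'M[F]_(n, e)}) x : (g x \in g @: A) = (x \in A).
  exact: mem_imset gray_inj.
rewrite /dH /dG big_imset_idem; last exact: minnn.
apply: eq_bigr => x Cx.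
rewrite (eq_bigl [in g @: (C :\ x)]); last first.
  by move=> w; have [y ->] := gray_surj w; rewrite /= !mem_g !inE (inj_eq gray_inj) andbC.
rewrite big_imset_idem; last exact: minnn.
rewrite (eq_bigl [in C :\ x]); last by move=> y; rewrite !inE andbC.
apply: eq_bigr => y _; rewrite grayB /hamming.
by apply: eq_card => i; rewrite !inE !mxE subr_eq0.
Qed.

Variable gamma : F.
Hypothesis MMT : M *m M^T = gamma%:M.

Lemma gray_dot (x y : 'M[F]_(n, e)) :
  g x *m (g y)^T = (gamma * \sum_(k < e) (Rdot x y *m V) 0 k)%:M.
Proof.
rewrite !grayE mxvec_dot !trmx_mul !mulmxA -(mulmxA (x *m V)) MMT mul_mx_scalar.
rewrite -!scalemxAl mxtraceZ -(mulmxA (x *m V)) -trmx_mul; congr (_ * _)%:M.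
under eq_bigr do rewrite Rdot_eval.
rewrite exchange_big; apply: eq_bigr => j _; rewrite !mxE.
by apply: eq_bigr => k _; rewrite !mxE.
Qed.

Hypothesis gamma_neq0 : gamma != 0.
Variable C : {set 'M[F]_(n, e)}.
Hypothesis C_Rlinear : Rlinear C.

Lemma Rlinear_scale a x : x \in C -> a *: x \in C.
Proof.
have [_ _ C_Rscale] := C_Rlinear; move=> Cx.
suff -> : a *: x = Rscale (const_mx a *m idem_mx mu) x by apply: C_Rscale.
apply: (can_inj (mulmxK (eval_mx_unit e_gt0 modpoly_split mu_idem))).
apply/matrixP => j k; rewrite Rscale_eval -mulmxA (idem_mxK e_gt0 modpoly_split mu_idem).
by rewrite mulmx1 -scalemxAl !mxE.
Qed.

Lemma gray_code_rowspace : g @: C = [set v | (v <= \sum_(w in g @: C) <<w>>)%MS].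
Proof.
have [C0 C_add _] := C_Rlinear.
apply: subspace_rowspace.
- by rewrite -gray0 imset_f.
- by move=> _ _ /imsetP [x Cx ->] /imsetP [y Cy ->]; rewrite -grayD imset_f ?C_add.
- by move=> a _ /imsetP [x Cx ->]; rewrite -grayZ imset_f ?Rlinear_scale.
Qed.

Lemma gray_Rdual : g @: Rdual C = Fdual (g @: C).
Proof.
apply/setP => v; have [y ->] := gray_surj v; rewrite (mem_imset _ _ gray_inj) !inE.
apply/forall_inP/forall_inP => [y_dual _ /imsetP [x Cx ->] | gy_dual x Cx].
  by rewrite gray_dot (eqP (y_dual x Cx)) mul0mx big1 ?mulr0 ?raddf0 // => k _; rewrite mxE.
have [_ _ C_Rscale] := C_Rlinear.
suff Rdot_eval0 : Rdot x y *m V = 0.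
  by rewrite -(mulmxK (eval_mx_unit e_gt0 modpoly_split mu_idem) (Rdot x y)) Rdot_eval0 mul0mx.
apply/rowP => l; have := gy_dual _ (imset_f g (C_Rscale (mu l) x Cx)).
rewrite gray_dot Rdot_Rscale_idem_sum => /eqP/matrixP/(_ 0 0).
by rewrite !mxE eqxx mulr1n => /eqP; rewrite mulf_eq0 (negPf gamma_neq0) => /eqP.
Qed.

End Gray.

Unset Implicit Arguments.
Theorem theorem2p4 (F : finFieldType) (p m e t n k : nat)
  (alpha : 'I_e -> F) (mu : 'I_e -> 'rV[F]_e) (M : 'M[F]_e) (gamma : F)
  (C : {set 'M[F]_(n, e)}) :
  prime p -> odd p -> #|F| = (p ^ m)%N ->
  (2 <= e)%N -> (1 <= t)%N -> #|F| = (e * t + 1)%N ->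
  modpoly F e = \prod_(i < e) ('X - (alpha i)%:P) ->
  idem_decomp alpha mu ->
  M \in unitmx -> gamma != 0 -> M *m M^T = gamma%:M ->
  Rlinear C -> #|C| = (#|F| ^ (e * k))%N ->
  [/\ (exists S : 'M[F]_(n * e), \rank S = (e * k)%N /\
          gray mu M @: C = [set v | (v <= S)%MS]) /\
        dH (gray mu M @: C) = dG mu M C,
      gray mu M @: Rdual C = Fdual (gray mu M @: C),
      C \subset Rdual C -> gray mu M @: C \subset Fdual (gray mu M @: C)
    & Fdual (gray mu M @: C) = gray mu M @: C <-> Rdual C = C].
Proof.
move=> _ _ _ e_ge2 t_ge1 cardF modpoly_split mu_idem M_unit gamma_neq0 MMT C_Rlinear cardC.
have e_gt0 : (0 < e)%N by apply: leq_trans e_ge2.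
have gray_inj := gray_inj e_gt0 modpoly_split mu_idem (n := n) M_unit.
have dual := gray_Rdual e_gt0 modpoly_split mu_idem M_unit MMT gamma_neq0 C_Rlinear.
split; last 3 first.
- exact: dual.
- by move=> C_selforth; rewrite -dual imsetS.
- by rewrite -dual; split=> [/(imset_inj gray_inj)|->].
split; last exact: (dH_gray e_gt0 modpoly_split mu_idem M_unit).
have rowspace := gray_code_rowspace e_gt0 modpoly_split mu_idem M C_Rlinear.
eexists; split; last exact: rowspace.
have q_gt1 : (1 < #|F|)%N by rewrite cardF addn1 ltnS muln_gt0 e_gt0.
by apply: (expnI q_gt1); rewrite -card_rowspace -rowspace card_imset.
Qed.
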